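(* Let $F:\mathbb{R}^d\to\mathbb{R}^d$ be $L$-Lipschitz and $\mu$-quasi strongly monotone with respect to $x^*$ where $F(x^* )=0$. Consider the deterministic past extragradient method: given $x_0$, $\hat x_{-1}=x_0$, and for $k\ge0$, $\hat x_k=x_k-\omega F(\hat x_{k-1})$, $x_{k+1}=x_k-\omega F(\hat x_k)$, with $0<\omega\le\frac1{4L}$. Then for all $k\ge0$, $$R_k^2\le\Big(1-\frac{\omega\mu}{2}\Big)^kR_0^2,\qquad R_k^2:=\|x_k-x^*\|^2+\|x_k-\hat x_{k-1}\|^2 .$$
   Context: $L$-Lipschitz: $\|F(x)-F(y)\|\le L\|x-y\|$. $\mu$-quasi strongly monotone ($\mu>0$): $\langle F(x),x-x^*\rangle\ge\mu\|x-x^*\|^2$ for all $x$. (This is the special case of stochastic past extragradient with exact operator evaluations, i.e. Expected Residual parameter $\delta=0$ and $\sigma_*^2=0$.) *)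

From mathcomp Require Import all_boot all_order all_algebra.
Set Implicit Arguments. Unset Strict Implicit. Unset Printing Implicit Defensive.
Import Order.TTheory GRing.Theory Num.Theory.
Local Open Scope ring_scope.

Definition dotv (R : rcfType) (d : nat) (u v : 'rV[R]_d) : R :=
  \sum_(i < d) u ord0 i * v ord0 i.

Definition normv (R : rcfType) (d : nat) (u : 'rV[R]_d) : R :=
  Num.sqrt (dotv u u).

Definition lipschitz (R : rcfType) (d : nat) (F : 'rV[R]_d -> 'rV[R]_d) (L : R) :=
  forall x y, normv (F x - F y) <= L * normv (x - y).

Definition quasi_strongly_monotone (R : rcfType) (d : nat)
  (F : 'rV[R]_d -> 'rV[R]_d) (mu : R) (xs : 'rV[R]_d) :=
  forall x, dotv (F x) (x - xs) >= mu * normv (x - xs) ^+ 2.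

(* Write u = x_k - x*, p = x_k - \hat x_{k-1}, a = F \hat x_k, b = F \hat x_{k-1}.
   Then x_{k+1} - x* = u - w a and x_{k+1} - \hat x_k = w (b - a), and expanding gives
   |u - w a|^2 + w^2 |b - a|^2 = |u|^2 - 2w <a, \hat x_k - x*> + 2w^2 |a - b|^2 - w^2 |b|^2.
   Quasi strong monotonicity at \hat x_k bounds the inner product, Lipschitz continuity
   bounds |a - b| by L |\hat x_k - \hat x_{k-1}| = L |p - w b|, and the parallelogram
   bound |v + v'|^2 <= 2|v|^2 + 2|v'|^2 relates the remaining squares to |u|^2, |p|^2, |b|^2.
   Since w L <= 1/4 and mu <= L (forced by the hypotheses in positive dimension), the
   |b|^2 terms have a nonpositive coefficient and R_{k+1}^2 <= (1 - w mu / 2) R_k^2. *)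

From mathcomp Require Import all_boot all_order all_algebra.
From mathcomp Require Import ring lra.
Import Order.TTheory GRing.Theory Num.Theory.
Set Implicit Arguments. Unset Strict Implicit. Unset Printing Implicit Defensive.
Local Open Scope ring_scope.

Section EuclideanSpace.
Variables (R : rcfType) (d : nat).
Implicit Types u v z : 'rV[R]_d.

Lemma dotvC u v : dotv u v = dotv v u.
Proof. by apply: eq_bigr => i _; rewrite mulrC. Qed.

Lemma dotvDl u v z : dotv (u + v) z = dotv u z + dotv v z.
Proof. by rewrite /dotv -big_split; apply: eq_bigr => i _; rewrite !mxE mulrDl. Qed.

Lemma dotvZl a u v : dotv (a *: u) v = a * dotv u v.
Proof. by rewrite /dotv mulr_sumr; apply: eq_bigr => i _; rewrite !mxE mulrA. Qed.

Lemma dotvNl u v : dotv (- u) v = - dotv u v.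
Proof. by rewrite -scaleN1r dotvZl mulN1r. Qed.

Lemma dotvDr u v z : dotv z (u + v) = dotv z u + dotv z v.
Proof. by rewrite dotvC dotvDl !(dotvC z). Qed.

Lemma dotvZr a u v : dotv u (a *: v) = a * dotv u v.
Proof. by rewrite dotvC dotvZl dotvC. Qed.

Lemma dotvNr u v : dotv u (- v) = - dotv u v.
Proof. by rewrite dotvC dotvNl dotvC. Qed.

Definition dotvE := (dotvDl, dotvDr, dotvNl, dotvNr, dotvZl, dotvZr).

Lemma dotvNN u : dotv (- u) (- u) = dotv u u.
Proof. by rewrite dotvNl dotvNr opprK. Qed.

Lemma dotvZZ a u : dotv (a *: u) (a *: u) = a ^+ 2 * dotv u u.
Proof. by rewrite dotvZl dotvZr mulrA -expr2. Qed.

Lemma dotvv_ge0 u : 0 <= dotv u u.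
Proof. by apply: sumr_ge0 => i _; rewrite -expr2 sqr_ge0. Qed.

Lemma normv_ge0 u : 0 <= normv u.
Proof. exact: sqrtr_ge0. Qed.

Lemma normv_sqr u : normv u ^+ 2 = dotv u u.
Proof. by rewrite sqr_sqrtr // dotvv_ge0. Qed.

Lemma dotv_young u v : 2 * dotv u v <= dotv u u + dotv v v.
Proof.
rewrite -subr_ge0; have := dotvv_ge0 (u - v).
by rewrite !dotvE (dotvC v u) => uv_ge0; apply: le_trans uv_ge0 _; lra.
Qed.

Lemma dotvD_sqr_le u v : dotv (u + v) (u + v) <= 2 * dotv u u + 2 * dotv v v.
Proof. by have := dotv_young u v; rewrite !dotvE (dotvC v u); lra. Qed.

Lemma lipschitz_sqr (F : 'rV[R]_d -> 'rV[R]_d) L u v : lipschitz F L ->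
  dotv (F u - F v) (F u - F v) <= L ^+ 2 * dotv (u - v) (u - v).
Proof.
move=> /(_ u v) FL; rewrite -!normv_sqr -exprMn.
by rewrite !expr2 ler_pM ?normv_ge0.
Qed.

Lemma normv_dim0 (u : 'rV[R]_0) : normv u = 0.
Proof. by rewrite /normv /dotv big_ord0 sqrtr0. Qed.

End EuclideanSpace.

Lemma quasi_strongly_monotone_le_lipschitz (R : rcfType) (d : nat)
    (F : 'rV[R]_d -> 'rV[R]_d) (L mu : R) (xs : 'rV[R]_d) :
  (0 < d)%N -> 0 < L -> lipschitz F L -> quasi_strongly_monotone F mu xs ->
  F xs = 0 -> mu <= L.
Proof.
move=> d_gt0 L_gt0 FL Fmon Fxs.
pose v : 'rV[R]_d := const_mx 1; pose a := F (xs + v).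
have v_gt0 : 0 < dotv v v.
  rewrite /dotv (eq_bigr (fun=> 1)) => [|i _]; last by rewrite !mxE mulr1.
  by rewrite sumr_const card_ord ltr0n.
have xsvK : xs + v - xs = v by rewrite addrC addKr.
have mon : mu * dotv v v <= dotv a v by have := Fmon (xs + v); rewrite xsvK normv_sqr.
have lip : dotv a a <= L ^+ 2 * dotv v v.
  by have := lipschitz_sqr (xs + v) xs FL; rewrite xsvK Fxs subr0.
have young : 2 * L * dotv a v <= dotv a a + L ^+ 2 * dotv v v.
  by have := dotv_young a (L *: v); rewrite !dotvE expr2 !mulrA.
rewrite -(ler_pM2r (mulr_gt0 L_gt0 v_gt0)); nra.
Qed.

(* U, P, B, H, M, D, G stand for |u|^2, |p|^2, |b|^2, |\hat x_k - x*|^2,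
   <a, \hat x_k - x*>, |a - b|^2 and |\hat x_k - \hat x_{k-1}|^2. *)
Lemma peg_contraction_scalar (R : realFieldType) (w L mu U P B H M D G : R) :
  0 < w -> 0 <= mu -> mu <= L -> w * L <= 1 / 4 ->
  0 <= U -> 0 <= P -> 0 <= B -> 0 <= G ->
  mu * H <= M -> D <= L ^+ 2 * G ->
  G <= 2 * P + 2 * w ^+ 2 * B -> U <= 2 * H + 2 * w ^+ 2 * B ->
  U - 2 * w * M + 2 * w ^+ 2 * D - w ^+ 2 * B <= (1 - w * mu / 2) * (U + P).
Proof.
move=> w0 mu0 muL wL U0 P0 B0 G0 hM hD hG hU.
have wmu0 : 0 <= w * mu by rewrite mulr_ge0 // ltW.
have wmu : w * mu <= 1 / 4 by apply: le_trans wL; rewrite ler_pM2l.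
have wL2 : (w * L) ^+ 2 <= 1 / 16.
  have wL0 : 0 <= w * L by apply: le_trans wmu0 _; rewrite ler_pM2l.
  by rewrite expr2; nra.
have hwM : w * mu * H <= w * M by rewrite -mulrA ler_pM2l.
have hwD : w ^+ 2 * D <= (w * L) ^+ 2 * G.
  by rewrite exprMn -[in X in _ <= X]mulrA; apply: ler_wpM2l; rewrite ?sqr_ge0.
nra.
Qed.

Lemma geometric_decay (R : numDomainType) (r : nat -> R) (c : R) :
  0 <= c -> (forall k, r k.+1 <= c * r k) -> forall k, r k <= c ^+ k * r 0%N.
Proof.
move=> c_ge0 step; elim=> [|k IH]; first by rewrite expr0 mul1r.
by rewrite exprS -mulrA; apply: le_trans (step k) (ler_wpM2l c_ge0 IH).
Qed.

Section PastExtragradient.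
Variables (R : rcfType) (d : nat) (F : 'rV[R]_d -> 'rV[R]_d) (L mu w : R) (xs : 'rV[R]_d).
Hypotheses (FL : lipschitz F L) (Fmon : quasi_strongly_monotone F mu xs).
Hypotheses (w_gt0 : 0 < w) (mu_ge0 : 0 <= mu) (mu_le_L : mu <= L) (wL : w * L <= 1 / 4).

Definition peg_residual (x xh : 'rV[R]_d) := normv (x - xs) ^+ 2 + normv (x - xh) ^+ 2.

Lemma peg_step_identity (u a b : 'rV[R]_d) :
  dotv (u - w *: a) (u - w *: a) + dotv (w *: (b - a)) (w *: (b - a))
  = dotv u u - 2 * w * dotv a (u - w *: b) + 2 * w ^+ 2 * dotv (a - b) (a - b)
    - w ^+ 2 * dotv b b.
Proof. by rewrite !dotvE (dotvC u a) (dotvC b a); ring. Qed.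

Lemma peg_residual_step xk xhk xh' x' :
  xh' = xk - w *: F xhk -> x' = xk - w *: F xh' ->
  peg_residual x' xh' <= (1 - w * mu / 2) * peg_residual xk xhk.
Proof.
move=> -> ->; set b := F xhk; set a := F (xk - w *: b).
set u := xk - xs; set p := xk - xhk.
have xS_xs : xk - w *: a - xs = u - w *: a by rewrite addrAC.
have xS_xhS : xk - w *: a - (xk - w *: b) = w *: (b - a).
  by rewrite scalerBr [xk - _]addrC addrKA opprK addrC.
have xhS_xs : xk - w *: b - xs = u - w *: b by rewrite addrAC.
have xhS_xh : xk - w *: b - xhk = p - w *: b by rewrite addrAC.
have mon : mu * dotv (u - w *: b) (u - w *: b) <= dotv a (u - w *: b).
  by have := Fmon (xk - w *: b); rewrite xhS_xs normv_sqr.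
have lip : dotv (a - b) (a - b) <= L ^+ 2 * dotv (p - w *: b) (p - w *: b).
  by have := lipschitz_sqr (xk - w *: b) xhk FL; rewrite xhS_xh.
have xhS_xh_le : dotv (p - w *: b) (p - w *: b) <= 2 * dotv p p + 2 * w ^+ 2 * dotv b b.
  by have := dotvD_sqr_le p (- (w *: b)); rewrite dotvNN dotvZZ mulrA.
have u_le : dotv u u <= 2 * dotv (u - w *: b) (u - w *: b) + 2 * w ^+ 2 * dotv b b.
  by have := dotvD_sqr_le (u - w *: b) (w *: b); rewrite subrK dotvZZ mulrA.
rewrite /peg_residual xS_xs xS_xhS !normv_sqr peg_step_identity.
by apply: peg_contraction_scalar mon lip xhS_xh_le u_le; rewrite ?dotvv_ge0.
Qed.

End PastExtragradient.

(* xh k stands for \hat x_{k-1}; so xh 0 = \hat x_{-1} = x_0,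
   xh (k+1) = \hat x_k = x_k - w F(\hat x_{k-1}),
   x (k+1) = x_k - w F(\hat x_k). *)
Theorem corollary4p2 (R : rcfType) (d : nat) (F : 'rV[R]_d -> 'rV[R]_d)
  (L mu w : R) (xs : 'rV[R]_d) (x xh : nat -> 'rV[R]_d) :
  0 < L -> lipschitz F L ->
  0 < mu -> quasi_strongly_monotone F mu xs -> F xs = 0 ->
  0 < w -> w <= 1 / (4 * L) ->
  xh 0%N = x 0%N ->
  (forall k : nat, xh k.+1 = x k - w *: F (xh k)) ->
  (forall k : nat, x k.+1 = x k - w *: F (xh k.+1)) ->
  forall k : nat,
    normv (x k - xs) ^+ 2 + normv (x k - xh k) ^+ 2
    <= (1 - w * mu / 2) ^+ k * (normv (x 0%N - xs) ^+ 2 + normv (x 0%N - xh 0%N) ^+ 2).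
Proof.
(* The bound holds for any starting point xh 0. *)
move=> L_gt0 FL mu_gt0 Fmon Fxs w_gt0 w_le _ xhS xS.
have [d0|d_gt0] := posnP d.
  by subst d => k; rewrite !normv_dim0 expr0n /= addr0 mulr0.
have mu_le_L := quasi_strongly_monotone_le_lipschitz d_gt0 L_gt0 FL Fmon Fxs.
have wL : w * L <= 1 / 4.
  by move: w_le; rewrite !ler_pdivlMr ?mulr_gt0 ?ltr0n //; lra.
apply: (geometric_decay (r := fun k => peg_residual xs (x k) (xh k))) => [|k].
  have : w * mu <= w * L by rewrite ler_pM2l.
  lra.
exact: (peg_residual_step FL Fmon w_gt0 (ltW mu_gt0) mu_le_L wL (xhS k) (xS k)).
Qed.
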